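(* Fix $x_{\rm A}>0$. For $0<x_{\rm B}<x_{\rm A}$ let $T_D^R(v_{\rm A};x_{\rm B})$ be the direct rectilinear elapsed-time function. Then $$\frac{\partial^2T_D^R}{\partial v_{\rm A}^2}(0;x_{\rm B})\longrightarrow+\infty\qquad\text{as }x_{\rm B}\to x_{\rm A}^-.$$
   Context: Kepler problem on a line normalized as $\ddot x=-1/x^2$ ($x>0$). For $v_{\rm A}<\sqrt{2/x_{\rm A}}$, $T_D^R(v_{\rm A};x_{\rm B})$ is the first time after $t_{\rm A}$ (minus $t_{\rm A}$) at which the solution with $x(t_{\rm A})=x_{\rm A}$, $\dot x(t_{\rm A})=v_{\rm A}$ reaches $x_{\rm B}$ (without collision with $0$; after culmination if $v_{\rm A}\ge0$). It is a smooth function of $v_{\rm A}$. *)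

From Stdlib Require Import Reals Lra ClassicalEpsilon.
Open Scope R_scope.

(* Direct rectilinear Kepler problem  x'' = -1/x^2,  x > 0, with t_A normalised
   to 0 (autonomous equation).  [IsHitTime xA vA xB T] says: T > 0 and there is
   a solution (x, v = x') on [0,T] with x(0)=xA, x'(0)=vA, staying in x>0
   (no collision), with x(T)=xB and x(t) <> xB for 0 <= t < T, i.e. T is the
   first time after t_A at which the motion reaches xB. *)
Definition IsHitTime (xA vA xB T : R) : Prop :=
  0 < T /\
  exists x v : R -> R,
    x 0 = xA /\ v 0 = vA /\ x T = xB /\
    (forall t, 0 <= t <= T ->
        0 < x t /\
        derivable_pt_lim x t (v t) /\
        derivable_pt_lim v t (- / (x t ^ 2))) /\
    (forall t, 0 <= t < T -> x t <> xB).

(* T_D^R(vA; xB) (for fixed xA): the (unique, by uniqueness of ODE solutions)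
   first hitting time, selected by Hilbert's epsilon. *)
Definition TDR (xA xB vA : R) : R :=
  epsilon (inhabits 0) (fun T => IsHitTime xA vA xB T).

(* Energy conservation v^2/2 - 1/x = -k/2, with k = 2/xA - vA^2 > 0, gives x = 2 / (k + v^2), and
   along the motion kepler_clock k v decreases at the constant rate k sqrt k.  The orbit reaches xB
   only after culmination, with velocity - sqrt (2/xB - k), which yields the hitting time in closed
   form.  Split as an odd function of vA plus a function of vA^2, its second derivative at vA = 0
   is twice the u-derivative of the second part at u = 0, which exceeds
   1 / (K0^2 sqrt (2/xB - K0)) for K0 = 2/xA and hence blows up as xB -> xA. *)
From Stdlib Require Import Reals Lra ClassicalEpsilon Ranalysis5.
From Coquelicot Require Import Coquelicot.
Open Scope R_scope.

Lemma Derive_of_derivable_pt_lim (f : R -> R) t l :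
  derivable_pt_lim f t l -> Derive (fun y => f y) t = l.
Proof. intros H. apply is_derive_unique, is_derive_Reals, H. Qed.

Lemma exists_lt_before_of_deriv_pos (f : R -> R) T l :
  0 < T -> derivable_pt_lim f T l -> 0 < l -> exists t, 0 < t < T /\ f t < f T.
Proof.
  intros HT Hd Hl. destruct (Hd l Hl) as [del Hdel].
  pose proof (cond_pos del) as Hdel0.
  set (h := - Rmin (del/2) (T/2)).
  assert (Hm1 := Rmin_l (del/2) (T/2)).
  assert (Hm2 := Rmin_r (del/2) (T/2)).
  assert (Hm3 : 0 < Rmin (del/2) (T/2)) by (apply Rmin_pos; lra).
  assert (Hh : h < 0) by (unfold h; lra).
  assert (Hha : Rabs h < del) by (unfold h; rewrite Rabs_Ropp, Rabs_right; lra).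
  specialize (Hdel h ltac:(lra) Hha).
  exists (T + h). split; [unfold h; lra|].
  apply Rabs_def2 in Hdel. destruct Hdel as [_ Hq].
  assert (Hq' : 0 < (f (T + h) - f T) / h) by lra.
  assert (f (T + h) - f T < 0).
  { replace (f (T + h) - f T) with ((f (T + h) - f T) / h * h) by (field; lra). nra. }
  lra.
Qed.

Lemma is_derive_even_at_0 (f : R -> R) l :
  (forall v, f (- v) = f v) -> is_derive f 0 l -> l = 0.
Proof.
  intros Hev Hd.
  assert (Hd' : is_derive f (- 0) l) by (rewrite Ropp_0; exact Hd).
  assert (Hn : is_derive (fun v : R => - v) 0 (-1)) by (auto_derive; auto; ring).
  pose proof (is_derive_comp f (fun v => - v) 0 _ _ Hd' Hn) as H.
  apply is_derive_ext with (g := f) in H; [|intros; apply Hev].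
  apply is_derive_unique in H. apply is_derive_unique in Hd.
  rewrite Hd in H. unfold scal in H; simpl in H; unfold mult in H; simpl in H. lra.
Qed.
Definition kepler_clock (k v : R) := 2 * atan (v / sqrt k) + 2 * v * sqrt k / (k + v^2).
Definition kepler_clock_rate (k v : R) := 4 * k * sqrt k / (k + v^2)^2.

Section KeplerClock.
Variable k : R.
Hypothesis Hk : 0 < k.

Lemma kepler_clock_derivable v : derivable_pt_lim (kepler_clock k) v (kepler_clock_rate k v).
Proof.
  apply is_derive_Reals. unfold kepler_clock, kepler_clock_rate.
  assert (Hs : 0 < sqrt k) by (apply sqrt_lt_R0; lra).
  assert (Hkv : 0 < k + v^2) by nra.
  auto_derive; [nra|].
  set (sk := sqrt k) in *.
  assert (E : k = sk * sk) by (unfold sk; rewrite sqrt_sqrt; lra).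
  rewrite E. field. repeat split; try lra.
Qed.

Lemma kepler_clock_rate_pos v : 0 < kepler_clock_rate k v.
Proof.
  unfold kepler_clock_rate. assert (0 < sqrt k) by (apply sqrt_lt_R0; lra).
  assert (0 < k + v^2) by nra.
  apply Rdiv_lt_0_compat; [nra | apply pow_lt; lra].
Qed.

Lemma kepler_clock_continuous v : continuity_pt (kepler_clock k) v.
Proof.
  apply derivable_continuous_pt. exists (kepler_clock_rate k v).
  apply kepler_clock_derivable.
Qed.

Lemma kepler_clock_lt x y : x < y -> kepler_clock k x < kepler_clock k y.
Proof.
  intros Hxy.
  destruct (MVT_cor2 (kepler_clock k) (kepler_clock_rate k) x y Hxy) as [c [Hc _]].
  { intros c _. apply kepler_clock_derivable. }
  pose proof (kepler_clock_rate_pos c). nra.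
Qed.

Lemma kepler_clock_le x y : x <= y -> kepler_clock k x <= kepler_clock k y.
Proof. intros [H|<-]; [apply Rlt_le, kepler_clock_lt, H | apply Rle_refl]. Qed.

Lemma kepler_clock_inj x y : kepler_clock k x = kepler_clock k y -> x = y.
Proof.
  intros H. destruct (Rtotal_order x y) as [h|[h|h]]; auto.
  - pose proof (kepler_clock_lt x y h); lra.
  - pose proof (kepler_clock_lt y x h); lra.
Qed.

End KeplerClock.

Lemma kepler_clock_opp k v : kepler_clock k (- v) = - kepler_clock k v.
Proof.
  unfold kepler_clock. replace (- v / sqrt k) with (- (v / sqrt k)) by (unfold Rdiv; ring).
  rewrite atan_opp. replace ((- v)^2) with (v^2) by ring. unfold Rdiv. ring.
Qed.

Definition kepler_clock_inv k lb ub y :=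
  epsilon (inhabits 0) (fun w => lb <= w <= ub /\ kepler_clock k w = y).

Section KeplerClockInverse.
Variables k lb ub : R.
Hypothesis Hk : 0 < k.
Hypothesis Hlu : lb < ub.

Lemma kepler_clock_inv_spec y :
  kepler_clock k lb <= y <= kepler_clock k ub ->
  lb <= kepler_clock_inv k lb ub y <= ub /\ kepler_clock k (kepler_clock_inv k lb ub y) = y.
Proof.
  intros Hy. unfold kepler_clock_inv. apply epsilon_spec.
  destruct (f_interv_is_interv (kepler_clock k) lb ub y Hlu Hy) as [w Hw].
  { intros; apply kepler_clock_continuous, Hk. }
  exists w; exact Hw.
Qed.

Lemma kepler_clock_inv_clock w : lb <= w <= ub -> kepler_clock_inv k lb ub (kepler_clock k w) = w.
Proof.
  intros Hw. apply (kepler_clock_inj k Hk).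
  apply kepler_clock_inv_spec. split; apply kepler_clock_le; lra.
Qed.

Lemma kepler_clock_inv_derivable y :
  kepler_clock k lb < y < kepler_clock k ub ->
  derivable_pt_lim (kepler_clock_inv k lb ub) y
    (/ kepler_clock_rate k (kepler_clock_inv k lb ub y)).
Proof.
  intros Hy.
  set (f := kepler_clock k). set (g := kepler_clock_inv k lb ub).
  assert (Hinc : forall x y, lb <= x -> x < y -> y <= ub -> f x < f y)
    by (intros; apply kepler_clock_lt; auto).
  assert (Hfg : forall x, f lb <= x -> x <= f ub -> comp f g x = id x)
    by (intros x H1 H2; apply kepler_clock_inv_spec; auto).
  assert (Hgw : forall x, f lb <= x -> x <= f ub -> lb <= g x <= ub)
    by (intros x H1 H2; apply kepler_clock_inv_spec; auto).
  assert (Hf' : forall a, g (f lb) <= a <= g (f ub) -> derivable_pt f a)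
    by (intros a _; exists (kepler_clock_rate k a); apply kepler_clock_derivable, Hk).
  assert (Hg : continuity_pt g y).
  { apply (continuity_pt_recip_interv f g lb ub Hlu Hinc Hfg Hgw); auto.
    intros; apply kepler_clock_continuous, Hk. }
  assert (Hflu : f lb < f ub) by (apply kepler_clock_lt; auto).
  assert (Hgy : g (f lb) <= g y <= g (f ub)).
  { unfold g, f. rewrite !kepler_clock_inv_clock by lra. apply kepler_clock_inv_spec; lra. }
  pose proof (derivable_pt_lim_recip_interv f g (f lb) (f ub) y Hf' Hg Hflu Hy Hgy) as H.
  assert (Hd : derive_pt f (g y) (Hf' (g y) Hgy) = kepler_clock_rate k (g y))
    by (apply derive_pt_eq_0, kepler_clock_derivable, Hk).
  rewrite Hd in H. rewrite <- Rmult_1_l. apply H.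
  - intros x Hx. apply Hfg; lra.
  - pose proof (kepler_clock_rate_pos k Hk (g y)). lra.
Qed.

End KeplerClockInverse.

Lemma Rdiv_lt_contravar c x y : 0 < c -> 0 < x < y -> c / y < c / x.
Proof. intros Hc Hxy. apply Rmult_lt_compat_l; [lra|]. apply Rinv_lt_contravar; nra. Qed.

Definition hit_time (xA xB vA : R) :=
  let k := 2 / xA - vA^2 in
  (kepler_clock k vA + kepler_clock k (sqrt (2 / xB - k))) / (k * sqrt k).

Section HitTimeUnique.
Variables xA xB vA T : R.
Variables x v : R -> R.
Hypothesis HB : 0 < xB < xA.
Hypothesis HvA : vA^2 < 2 / xA.
Hypothesis HT : 0 < T.
Hypothesis Hx0 : x 0 = xA.
Hypothesis Hv0 : v 0 = vA.
Hypothesis HxT : x T = xB.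
Hypothesis Hode : forall t, 0 <= t <= T ->
  0 < x t /\ derivable_pt_lim x t (v t) /\ derivable_pt_lim v t (- / (x t ^ 2)).
Hypothesis Hfirst : forall t, 0 <= t < T -> x t <> xB.

Let k := 2 / xA - vA^2.

Lemma energy_conserved t : 0 <= t <= T -> v t ^ 2 / 2 - / x t = vA ^ 2 / 2 - / xA.
Proof.
  intros Ht. destruct (Req_dec t 0) as [->|Ht0]; [rewrite Hx0, Hv0; reflexivity|].
  destruct (MVT_cor2 (fun t => v t ^ 2 / 2 - / x t) (fun _ => 0) 0 t) as [c [Hc _]]; [lra| |].
  - intros c Hc. destruct (Hode c ltac:(lra)) as [Hxc [Hdx Hdv]].
    apply is_derive_Reals. auto_derive.
    + refine (conj _ (conj _ (conj _ I))).
      * exists (- / x c ^ 2); apply is_derive_Reals; auto.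
      * exists (v c); apply is_derive_Reals; auto.
      * lra.
    + rewrite (Derive_of_derivable_pt_lim _ _ _ Hdx), (Derive_of_derivable_pt_lim _ _ _ Hdv).
      field. lra.
  - rewrite <- Hx0, <- Hv0. lra.
Qed.

Lemma position_of_velocity t : 0 <= t <= T -> x t = 2 / (k + v t ^ 2).
Proof.
  intros Ht. pose proof (energy_conserved t Ht) as E. destruct (Hode t Ht) as [Hxt _].
  assert (0 < k + v t ^ 2) by (unfold k; nra).
  assert (Hi : / x t = (k + v t ^ 2) / 2) by (unfold k, Rdiv in *; lra).
  rewrite <- (Rinv_inv (x t)), Hi. field. lra.
Qed.

Lemma kepler_clock_along_solution :
  kepler_clock k (v T) - kepler_clock k vA = - (k * sqrt k) * T.
Proof.
  assert (Hk : 0 < k) by (unfold k; lra).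
  destruct (MVT_cor2 (fun t => kepler_clock k (v t)) (fun _ => - (k * sqrt k)) 0 T)
    as [c [Hc _]]; [lra| |].
  - intros c Hc. destruct (Hode c Hc) as [Hxc [Hdx Hdv]].
    replace (- (k * sqrt k)) with (kepler_clock_rate k (v c) * (- / x c ^ 2)).
    + apply (derivable_pt_lim_comp v (kepler_clock k)); auto.
      apply kepler_clock_derivable, Hk.
    + rewrite (position_of_velocity c Hc). unfold kepler_clock_rate.
      assert (0 < k + v c ^ 2) by nra. field. lra.
  - rewrite Hv0 in Hc. lra.
Qed.

Lemma final_speed_sq : v T ^ 2 = 2 / xB - k.
Proof.
  pose proof (energy_conserved T ltac:(lra)) as E. rewrite HxT in E.
  unfold k, Rdiv in *. lra.
Qed.

(* A positive final velocity would put x below xB just before T, hence (x 0 = xA > xB) an earlier crossing of xB. *)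
Lemma final_velocity : v T = - sqrt (2 / xB - k).
Proof.
  assert (Hpos : 0 < 2 / xB - k) by (pose proof (Rdiv_lt_contravar 2 xB xA); unfold k; nra).
  assert (HvT : v T < 0).
  { destruct (Rlt_or_le (v T) 0) as [h|h]; auto. exfalso.
    assert (HvT0 : 0 < v T).
    { destruct h as [h|h]; auto. pose proof final_speed_sq as E. rewrite <- h in E. simpl in E. lra. }
    destruct (Hode T ltac:(lra)) as [_ [HdxT _]].
    destruct (exists_lt_before_of_deriv_pos x T (v T) HT HdxT HvT0) as [t1 [Ht1 Hxt1]].
    destruct (IVT_interv (fun t => xB - x t) 0 t1) as [z [Hz Hz2]].
    - intros a Ha. apply continuity_pt_minus; [apply continuity_pt_const; intros ? ?; auto|].
      destruct (Hode a ltac:(lra)) as [_ [Hda _]].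
      apply derivable_continuous_pt. exists (v a). exact Hda.
    - lra.
    - rewrite Hx0; lra.
    - rewrite HxT in Hxt1. lra.
    - apply (Hfirst z); lra. }
  rewrite <- final_speed_sq. replace (v T ^ 2) with ((- v T) ^ 2) by ring.
  rewrite sqrt_pow2 by lra. ring.
Qed.

Lemma hit_time_eq : T = hit_time xA xB vA.
Proof.
  pose proof kepler_clock_along_solution as HQ.
  assert (Hk : 0 < k) by (unfold k; lra).
  assert (0 < sqrt k) by (apply sqrt_lt_R0; lra).
  rewrite final_velocity, kepler_clock_opp in HQ.
  unfold hit_time. fold k. field_simplify_eq; [|lra]. nra.
Qed.

End HitTimeUnique.

Lemma IsHitTime_unique xA xB vA T :
  0 < xB < xA -> vA ^ 2 < 2 / xA -> IsHitTime xA vA xB T -> T = hit_time xA xB vA.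
Proof.
  intros HB Hv [HT [x [v [Hx0 [Hv0 [HxT [Hode Hfirst]]]]]]].
  exact (hit_time_eq xA xB vA T x v HB Hv HT Hx0 Hv0 HxT Hode Hfirst).
Qed.

(* The motion is constructed by running the Kepler clock backwards: v(t) is the inverse image of
   kepler_clock k vA - k sqrt k t, and x = 2 / (k + v^2). *)
Section HitTimeExists.
Variables xA xB vA : R.
Hypothesis HB : 0 < xB < xA.
Hypothesis HvA : vA ^ 2 < 2 / xA.

Let k := 2 / xA - vA ^ 2.
Let s := sqrt (2 / xB - k).
Let c := k * sqrt k.
Let lb := - s - 1.
Let ub := s + 1.
Let T := hit_time xA xB vA.
Let w t := kepler_clock_inv k lb ub (kepler_clock k vA - c * t).

Let Hk : 0 < k.
Proof. unfold k; lra. Qed.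

Let Hc : 0 < c.
Proof. assert (0 < sqrt k) by (apply sqrt_lt_R0, Hk). unfold c. pose proof Hk. nra. Qed.

Let Hs2 : s * s = 2 / xB - k.
Proof.
  pose proof (Rdiv_lt_contravar 2 xB xA ltac:(lra) HB).
  unfold s. rewrite sqrt_sqrt; unfold k; nra.
Qed.

Let Hs : - s < vA < s.
Proof.
  assert (0 <= s) by apply sqrt_pos.
  assert (vA * vA < s * s) by (rewrite Hs2; pose proof (Rdiv_lt_contravar 2 xB xA); unfold k; nra).
  split; nra.
Qed.

Let HcT : c * T = kepler_clock k vA + kepler_clock k s.
Proof. unfold T, hit_time. fold k s. fold c. field. lra. Qed.

Let HT : 0 < T.
Proof.
  pose proof (kepler_clock_lt k Hk (- s) vA ltac:(lra)). rewrite kepler_clock_opp in H.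
  apply Rmult_lt_reg_l with c; [exact Hc|]. lra.
Qed.

Lemma velocity_spec t : 0 <= t <= T ->
  lb <= w t <= ub /\ kepler_clock k (w t) = kepler_clock k vA - c * t.
Proof.
  intros Ht. apply kepler_clock_inv_spec; [exact Hk | unfold lb, ub; lra |].
  assert (c * t <= c * T) by (apply Rmult_le_compat_l; lra).
  assert (0 <= c * t) by nra.
  pose proof (kepler_clock_le k Hk lb (- s) ltac:(unfold lb; lra)).
  pose proof (kepler_clock_le k Hk vA ub ltac:(unfold ub; lra)).
  rewrite kepler_clock_opp in *. lra.
Qed.

Lemma velocity_derivable t : 0 <= t <= T -> derivable_pt_lim w t (- (k + w t ^ 2) ^ 2 / 4).
Proof.
  intros Ht.
  assert (Hy : kepler_clock k lb < kepler_clock k vA - c * t < kepler_clock k ub).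
  { assert (c * t <= c * T) by (apply Rmult_le_compat_l; lra).
    assert (0 <= c * t) by nra.
    pose proof (kepler_clock_lt k Hk lb (- s) ltac:(unfold lb; lra)).
    pose proof (kepler_clock_lt k Hk vA ub ltac:(unfold ub; lra)).
    rewrite kepler_clock_opp in *. lra. }
  replace (- (k + w t ^ 2) ^ 2 / 4) with (/ kepler_clock_rate k (w t) * (- c)).
  - unfold w. apply (derivable_pt_lim_comp (fun t => kepler_clock k vA - c * t)).
    + apply is_derive_Reals. auto_derive; auto. ring.
    + apply kepler_clock_inv_derivable; auto. unfold lb, ub; lra.
  - unfold kepler_clock_rate, c. assert (0 < k + w t ^ 2) by (pose proof Hk; nra).
    assert (0 < sqrt k) by (apply sqrt_lt_R0, Hk). field. lra.
Qed.

Lemma velocity_at_0 : w 0 = vA.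
Proof.
  unfold w. rewrite Rmult_0_r, Rminus_0_r.
  apply kepler_clock_inv_clock; [exact Hk | unfold lb, ub; lra..].
Qed.

Lemma velocity_at_T : w T = - s.
Proof.
  unfold w. replace (kepler_clock k vA - c * T) with (kepler_clock k (- s))
    by (rewrite kepler_clock_opp; lra).
  apply kepler_clock_inv_clock; [exact Hk | unfold lb, ub; lra..].
Qed.

Lemma velocity_before_T t : 0 <= t < T -> - s < w t <= vA.
Proof.
  intros Ht. destruct (velocity_spec t ltac:(lra)) as [_ Hw].
  assert (c * t < c * T) by (apply Rmult_lt_compat_l; lra).
  assert (0 <= c * t) by nra.
  split.
  - destruct (Rlt_or_le (- s) (w t)) as [h|h]; auto. exfalso.
    pose proof (kepler_clock_le k Hk _ _ h). rewrite kepler_clock_opp in *. lra.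
  - destruct (Rle_or_lt (w t) vA) as [h|h]; auto. exfalso.
    pose proof (kepler_clock_lt k Hk _ _ h). lra.
Qed.

Lemma hit_time_witness : IsHitTime xA vA xB T.
Proof.
  split; [exact HT|].
  exists (fun t => 2 / (k + w t ^ 2)), w.
  split; [|split; [exact velocity_at_0 | split; [|split]]].
  - rewrite velocity_at_0. unfold k. field. split; lra.
  - rewrite velocity_at_T. replace ((- s) ^ 2) with (s * s) by ring. rewrite Hs2. field. lra.
  - intros t Ht. pose proof (velocity_derivable t Ht) as Hd.
    assert (0 < k + w t ^ 2) by (pose proof Hk; nra).
    split; [apply Rdiv_lt_0_compat; lra|]. split.
    + apply is_derive_Reals. auto_derive.
      * split; [exists (- (k + w t ^ 2) ^ 2 / 4); apply is_derive_Reals; auto|]. split; [lra|auto].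
      * rewrite (Derive_of_derivable_pt_lim _ _ _ Hd). field. lra.
    + replace (- / (2 / (k + w t ^ 2)) ^ 2) with (- (k + w t ^ 2) ^ 2 / 4) by (field; lra).
      exact Hd.
  - intros t Ht E. destruct (velocity_before_T t Ht).
    assert (w t * w t < s * s) by nra.
    assert (0 < k + w t ^ 2) by (pose proof Hk; nra).
    assert (Hlt : k + w t ^ 2 < 2 / xB) by nra.
    apply (Rmult_lt_compat_l xB) in Hlt; [|lra].
    rewrite <- E in Hlt. field_simplify in Hlt; lra.
Qed.

End HitTimeExists.

Lemma TDR_eq_hit_time xA xB vA :
  0 < xB < xA -> vA ^ 2 < 2 / xA -> TDR xA xB vA = hit_time xA xB vA.
Proof.
  intros HB Hv. apply (IsHitTime_unique xA xB vA _ HB Hv).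
  unfold TDR. apply epsilon_spec. exists (hit_time xA xB vA).
  apply hit_time_witness; assumption.
Qed.

(* With k = K0 - v^2 and s = sqrt (a - k), hit_time = (kepler_clock k v + kepler_clock k s) / (k sqrt k);
   apex_time is the first summand, odd in v, and fall_time the second, a function of u = v^2. *)
Definition apex_time (K0 v : R) :=
  2 * atan (v / sqrt (K0 - v^2)) / sqrt (K0 - v^2) ^ 3 + 2 * v / (K0 * sqrt (K0 - v^2) ^ 2).
Definition apex_time_deriv (K0 v : R) :=
  2 / sqrt (K0 - v^2) ^ 4 + 6 * v * atan (v / sqrt (K0 - v^2)) / sqrt (K0 - v^2) ^ 5
  + 2 / (K0 * sqrt (K0 - v^2) ^ 2) + 4 * v^2 / (K0 * sqrt (K0 - v^2) ^ 4).
Definition fall_time (K0 a u : R) :=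
  2 * atan (sqrt (u + (a - K0)) / sqrt (K0 - u)) / sqrt (K0 - u) ^ 3
  + 2 * sqrt (u + (a - K0)) / (a * sqrt (K0 - u) ^ 2).
Definition fall_time_deriv (K0 a u : R) :=
  1 / (sqrt (u + (a - K0)) * sqrt (K0 - u) ^ 4)
  + 3 * atan (sqrt (u + (a - K0)) / sqrt (K0 - u)) / sqrt (K0 - u) ^ 5
  + 1 / (a * sqrt (u + (a - K0)) * sqrt (K0 - u) ^ 2)
  + 2 * sqrt (u + (a - K0)) / (a * sqrt (K0 - u) ^ 4).

Definition elapsed_time (K0 a v : R) := apex_time K0 v + fall_time K0 a (v^2).
Definition elapsed_time_deriv (K0 a v : R) := apex_time_deriv K0 v + 2 * v * fall_time_deriv K0 a (v^2).

Ltac solve_side_conditions :=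
  repeat match goal with |- _ /\ _ => split end; try exact I; try lra;
  try (repeat apply Rmult_integral_contrapositive_currified; lra); try (intro; nra).

Lemma is_derive_apex_time K0 v : v^2 < K0 -> is_derive (apex_time K0) v (apex_time_deriv K0 v).
Proof.
  intros Hv. unfold apex_time, apex_time_deriv.
  assert (Hr : 0 < sqrt (K0 - v^2)) by (apply sqrt_lt_R0; lra).
  assert (HK0 : 0 < K0) by nra.
  auto_derive;
  replace (K0 + - (v * (v * 1))) with (K0 - v^2) by ring;
  set (r := sqrt (K0 - v^2)) in *; [solve_side_conditions|].
  assert (E : K0 = r * r + v * v) by (unfold r; rewrite sqrt_sqrt; lra).
  rewrite E. unfold Rdiv. field. solve_side_conditions.
Qed.

Lemma is_derive_fall_time K0 a u :
  0 < u + (a - K0) -> u < K0 -> 0 < a -> is_derive (fall_time K0 a) u (fall_time_deriv K0 a u).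
Proof.
  intros Hs Hr0 Ha. unfold fall_time, fall_time_deriv.
  assert (Hr : 0 < sqrt (K0 - u)) by (apply sqrt_lt_R0; lra).
  assert (Hsg : 0 < sqrt (u + (a - K0))) by (apply sqrt_lt_R0; lra).
  auto_derive;
  replace (K0 + - u) with (K0 - u) by ring;
  set (r := sqrt (K0 - u)) in *; set (sg := sqrt (u + (a - K0))) in *; [solve_side_conditions|].
  assert (Ea : a = sg * sg + r * r) by (unfold sg, r; rewrite !sqrt_sqrt; lra).
  rewrite Ea. unfold Rdiv. field. solve_side_conditions.
Qed.

Lemma is_derive_elapsed_time K0 a v :
  K0 < a -> v^2 < K0 -> is_derive (elapsed_time K0 a) v (elapsed_time_deriv K0 a v).
Proof.
  intros Ha Hv.
  assert (Hsq : is_derive (fun v : R => v^2) v (2 * v)) by (auto_derive; auto; ring).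
  assert (Hg := is_derive_fall_time K0 a (v^2) ltac:(nra) Hv ltac:(nra)).
  pose proof (is_derive_plus _ _ _ _ _ (is_derive_apex_time K0 v Hv)
                (is_derive_comp (fall_time K0 a) (fun v => v^2) v _ _ Hg Hsq)) as H.
  unfold elapsed_time, elapsed_time_deriv.
  replace (apex_time_deriv K0 v + 2 * v * fall_time_deriv K0 a (v ^ 2))
    with (plus (apex_time_deriv K0 v) (scal (2 * v) (fall_time_deriv K0 a (v ^ 2)))); [exact H|].
  unfold plus, scal; simpl. unfold mult; simpl. ring.
Qed.

Lemma hit_time_eq_elapsed_time xA xB v :
  0 < xB < xA -> v^2 < 2 / xA -> hit_time xA xB v = elapsed_time (2 / xA) (2 / xB) v.
Proof.
  intros HB Hv.
  unfold hit_time, elapsed_time, apex_time, fall_time, kepler_clock.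
  replace (v^2 + (2 / xB - 2 / xA)) with (2 / xB - (2 / xA - v^2)) by ring.
  pose proof (Rdiv_lt_contravar 2 xB xA ltac:(lra) HB) as Hab.
  assert (Hr : 0 < sqrt (2 / xA - v^2)) by (apply sqrt_lt_R0; lra).
  assert (Hs : 0 < sqrt (2 / xB - (2 / xA - v^2))) by (apply sqrt_lt_R0; nra).
  set (r := sqrt (2 / xA - v^2)) in *. set (sg := sqrt (2 / xB - (2 / xA - v^2))) in *.
  assert (EA : 2 / xA = r * r + v * v) by (unfold r; rewrite sqrt_sqrt; lra).
  assert (EB : 2 / xB = sg * sg + r * r) by (unfold sg, r; rewrite !sqrt_sqrt; nra).
  rewrite EB, EA. unfold Rdiv. field. solve_side_conditions.
Qed.

Lemma TDR_derivable xA xB vA : 0 < xA -> 0 < xB < xA -> Rabs vA < sqrt (2 / xA) ->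
  derivable_pt_lim (TDR xA xB) vA (elapsed_time_deriv (2 / xA) (2 / xB) vA).
Proof.
  intros HxA HB HvA.
  assert (HK0 : 0 < 2 / xA) by (apply Rdiv_lt_0_compat; lra).
  assert (Hsq : sqrt (2 / xA) * sqrt (2 / xA) = 2 / xA) by (apply sqrt_sqrt; lra).
  assert (Hsq_lt : forall y, Rabs y < sqrt (2 / xA) -> y^2 < 2 / xA).
  { intros y Hy. rewrite <- (pow2_abs y). pose proof (Rabs_pos y). nra. }
  apply is_derive_Reals, is_derive_ext_loc with (f := elapsed_time (2 / xA) (2 / xB)).
  - exists (mkposreal (sqrt (2 / xA) - Rabs vA) ltac:(lra)).
    intros y Hy. change R in y. change (Rabs (y - vA) < sqrt (2 / xA) - Rabs vA) in Hy.
    assert (Hy2 : Rabs y < sqrt (2 / xA)).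
    { pose proof (Rabs_triang (y - vA) vA). replace (y - vA + vA) with y in H by ring. lra. }
    rewrite TDR_eq_hit_time, hit_time_eq_elapsed_time; auto.
  - apply is_derive_elapsed_time; auto.
    apply Rdiv_lt_contravar; lra.
Qed.

Lemma apex_time_deriv_even K0 v : apex_time_deriv K0 (- v) = apex_time_deriv K0 v.
Proof.
  unfold apex_time_deriv. replace ((- v)^2) with (v^2) by ring.
  replace (- v / sqrt (K0 - v^2)) with (- (v / sqrt (K0 - v^2))) by (unfold Rdiv; ring).
  rewrite atan_opp. unfold Rdiv. ring.
Qed.

Lemma ex_derive_apex_time_deriv_0 K0 : 0 < K0 -> ex_derive (apex_time_deriv K0) 0.
Proof.
  intros HK. unfold apex_time_deriv.
  assert (Hr : 0 < sqrt (K0 - 0^2)) by (apply sqrt_lt_R0; simpl; lra).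
  auto_derive. replace (K0 + - (0 * (0 * 1))) with (K0 - 0^2) by ring. solve_side_conditions.
Qed.

Lemma ex_derive_fall_time_deriv_0 K0 a : 0 < K0 < a -> ex_derive (fall_time_deriv K0 a) 0.
Proof.
  intros HK. unfold fall_time_deriv.
  assert (Hr : 0 < sqrt (K0 - 0)) by (apply sqrt_lt_R0; lra).
  assert (Hs : 0 < sqrt (0 + (a - K0))) by (apply sqrt_lt_R0; lra).
  auto_derive. replace (K0 + - 0) with (K0 - 0) by ring. solve_side_conditions.
Qed.

Lemma is_derive_elapsed_time_deriv_0 K0 a :
  0 < K0 < a -> is_derive (elapsed_time_deriv K0 a) 0 (2 * fall_time_deriv K0 a 0).
Proof.
  intros HK.
  destruct (ex_derive_apex_time_deriv_0 K0 ltac:(lra)) as [l Hl].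
  assert (l = 0) by (apply (is_derive_even_at_0 (apex_time_deriv K0)); auto; apply apex_time_deriv_even).
  subst l.
  assert (H2 : is_derive (fun v => 2 * v * fall_time_deriv K0 a (v^2)) 0 (2 * fall_time_deriv K0 a 0)).
  { destruct (ex_derive_fall_time_deriv_0 K0 a HK) as [m Hm].
    auto_derive; replace (0 * (0 * 1)) with 0 by ring; [exists m; exact Hm | ring]. }
  pose proof (is_derive_plus _ _ _ _ _ Hl H2) as H.
  unfold elapsed_time_deriv.
  replace (2 * fall_time_deriv K0 a 0) with (plus 0 (2 * fall_time_deriv K0 a 0))
    by (unfold plus; simpl; ring).
  exact H.
Qed.

Lemma fall_time_deriv_0_gt K0 a : 0 < K0 < a -> 1 / (sqrt (a - K0) * K0^2) < fall_time_deriv K0 a 0.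
Proof.
  intros HK. unfold fall_time_deriv.
  replace (0 + (a - K0)) with (a - K0) by ring. replace (K0 - 0) with K0 by ring.
  assert (Hr : 0 < sqrt K0) by (apply sqrt_lt_R0; lra).
  assert (Hs : 0 < sqrt (a - K0)) by (apply sqrt_lt_R0; lra).
  assert (E4 : sqrt K0 ^ 4 = K0^2).
  { replace (sqrt K0 ^ 4) with ((sqrt K0 * sqrt K0)^2) by ring. rewrite sqrt_sqrt; lra. }
  rewrite E4.
  assert (Ha : 0 < atan (sqrt (a - K0) / sqrt K0)).
  { rewrite <- atan_0. apply atan_increasing, Rdiv_lt_0_compat; auto. }
  assert (0 < 3 * atan (sqrt (a - K0) / sqrt K0) / sqrt K0 ^ 5)
    by (apply Rdiv_lt_0_compat; [lra | apply pow_lt; auto]).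
  assert (0 < 1 / (a * sqrt (a - K0) * sqrt K0 ^ 2))
    by (apply Rdiv_lt_0_compat; [lra | apply Rmult_lt_0_compat; [nra | apply pow_lt; auto]]).
  assert (0 < 2 * sqrt (a - K0) / (a * K0 ^ 2))
    by (apply Rdiv_lt_0_compat; [lra | apply Rmult_lt_0_compat; [lra | apply pow_lt; lra]]).
  lra.
Qed.

Lemma fall_time_deriv_0_unbounded K0 M : 0 < K0 ->
  exists eps, 0 < eps /\ forall a, K0 < a < K0 + eps -> M < 2 * fall_time_deriv K0 a 0.
Proof.
  intros HK0.
  assert (HK2 : 0 < K0^2) by (apply pow_lt; lra).
  assert (HM : 0 < Rabs M + 1) by (pose proof (Rabs_pos M); lra).
  set (r := / (K0^2 * (Rabs M + 1))).
  assert (Hr : 0 < r) by (apply Rinv_0_lt_compat, Rmult_lt_0_compat; lra).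
  exists (r^2). split; [nra|]. intros a Ha.
  assert (Hsh0 : 0 < sqrt (a - K0)) by (apply sqrt_lt_R0; lra).
  assert (Hsh : sqrt (a - K0) < r).
  { rewrite <- (sqrt_pow2 r) by lra. apply sqrt_lt_1_alt. lra. }
  assert (Hb : Rabs M + 1 < 1 / (sqrt (a - K0) * K0^2)).
  { unfold Rdiv. rewrite Rmult_1_l.
    replace (Rabs M + 1) with (/ (K0^2 * r)) by (unfold r; field; lra).
    apply Rinv_lt_contravar.
    - apply Rmult_lt_0_compat; apply Rmult_lt_0_compat; lra.
    - nra. }
  pose proof (fall_time_deriv_0_gt K0 a ltac:(lra)). pose proof (Rle_abs M). lra.
Qed.

Theorem mainTheorem12 (xA : R) (hxA : 0 < xA) :
  forall M : R, exists delta : R, 0 < delta /\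
    forall xB : R, xA - delta < xB < xA -> 0 < xB ->
      exists (d1 : R -> R) (d2 : R),
        (forall vA, Rabs vA < sqrt (2 / xA) ->
           derivable_pt_lim (TDR xA xB) vA (d1 vA)) /\
        derivable_pt_lim d1 0 d2 /\
        M < d2.
Proof.
  intros M.
  assert (HK0 : 0 < 2 / xA) by (apply Rdiv_lt_0_compat; lra).
  destruct (fall_time_deriv_0_unbounded (2 / xA) M HK0) as [eps [Heps Hbig]].
  assert (Hd1 := Rmin_l (xA / 2) (eps * xA^2 / 4)).
  assert (Hd2 := Rmin_r (xA / 2) (eps * xA^2 / 4)).
  set (delta := Rmin (xA / 2) (eps * xA^2 / 4)) in *.
  assert (HxA2 : 0 < xA^2) by (apply pow_lt; lra).
  exists delta. split; [apply Rmin_pos; nra|].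
  intros xB HxB HxB0.
  assert (HB : 0 < xB < xA) by lra.
  assert (Ha : 2 / xA < 2 / xB < 2 / xA + eps).
  { split; [apply Rdiv_lt_contravar; lra|].
    assert (E : 2 / xB - 2 / xA = 2 * (xA - xB) / (xA * xB)) by (field; lra).
    assert (2 * (xA - xB) < eps * (xA * xB)) by nra.
    assert (2 * (xA - xB) / (xA * xB) < eps) by (apply Rlt_div_l; nra).
    lra. }
  exists (elapsed_time_deriv (2 / xA) (2 / xB)), (2 * fall_time_deriv (2 / xA) (2 / xB) 0).
  split; [|split].
  - intros vA HvA. apply TDR_derivable; auto.
  - apply is_derive_Reals, is_derive_elapsed_time_deriv_0. lra.
  - apply Hbig, Ha.
Qed.
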